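(* If $\Gamma\vdash^A M:\tau$ and $M\to M'$, then $\Gamma\vdash^A M':\tau$.
   Context: Calculus $\lambda^{\triangleright}$. Let $\mathcal{G}$ be a countably infinite set of transition variables $\alpha,\beta,\dots$. A transition (or stage) $A,B$ is a finite sequence of transition variables; $\varepsilon$ is the empty sequence and $AB$ is concatenation. Types: $\tau ::= b \mid \tau\to\tau \mid \triangleright_\alpha\tau \mid \forall\alpha.\tau$ ($b$ ranges over base types; $\alpha$ is bound in $\forall\alpha.\tau$). Terms: $M ::= x \mid M\,M \mid \lambda x{:}\tau.M \mid \blacktriangleright_\alpha M \mid \blacktriangleleft_\alpha M \mid \Lambda\alpha.M \mid M\,A$ (quotation, unquotation, transition abstraction, and instantiation by a transition $A$); $x$ is bound in $\lambda x{:}\tau.M$ and $\alpha$ in $\Lambda\alpha.M$; bound variables are tacitly renamed. For $A=\alpha_1\cdots\alpha_n$ write $\triangleright_A\tau=\triangleright_{\alpha_1}\cdots\triangleright_{\alpha_n}\tau$, $\blacktriangleright_A M=\blacktriangleright_{\alpha_1}\cdots\blacktriangleright_{\alpha_n}M$, and $\blacktriangleleft_A M=\blacktriangleleft_{\alpha_n}\cdots\blacktriangleleft_{\alpha_1}M$ (all three are the identity when $A=\varepsilon$). Capture-avoiding substitution $\tau[\alpha:=B]$, $M[\alpha:=B]$, $A[\alpha:=B]$ of a transition for a transition variable replaces $\alpha$ by $B$ in transitions and replaces $\triangleright_\alpha,\blacktriangleright_\alpha,\blacktriangleleft_\alpha$ by $\triangleright_B,\blacktriangleright_B,\blacktriangleleft_B$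 respectively. $M[x:=N]$ is capture-avoiding term substitution. $\mathrm{FTV}$ denotes free transition variables. A context $\Gamma$ is a finite set $\{x_1:\tau_1@A_1,\dots,x_n:\tau_n@A_n\}$ with distinct $x_i$; $\mathrm{FTV}(\Gamma)=\bigcup_i(\mathrm{FTV}(\tau_i)\cup\mathrm{FTV}(A_i))$. Typing judgments $\Gamma\vdash^A M:\tau$ are derived by: (Var) $x:\tau@A\in\Gamma \Rightarrow \Gamma\vdash^A x:\tau$; (Abs) $\Gamma,x:\tau@A\vdash^A M:\sigma \Rightarrow \Gamma\vdash^A\lambda x{:}\tau.M:\tau\to\sigma$; (App) $\Gamma\vdash^A M:\tau\to\sigma$ and $\Gamma\vdash^A N:\tau$ $\Rightarrow \Gamma\vdash^A M\,N:\sigma$; (Quote) $\Gamma\vdash^{A\alpha}M:\tau \Rightarrow \Gamma\vdash^A\blacktriangleright_\alpha M:\triangleright_\alpha\tau$; (Unquote) $\Gamma\vdash^A M:\triangleright_\alpha\tau \Rightarrow \Gamma\vdash^{A\alpha}\blacktriangleleft_\alpha M:\tau$; (Gen) $\Gamma\vdash^A M:\tau$ and $\alpha\notin\mathrm{FTV}(\Gamma)\cup\mathrm{FTV}(A)$ $\Rightarrow \Gamma\vdash^A\Lambda\alpha.M:\forall\alpha.\tau$; (Ins) $\Gamma\vdash^A M:\forall\alpha.\tau \Rightarrow \Gamma\vdash^A M\,B:\tau[\alpha:=B]$. Reduction $M\to N$ is the least relation closed under all term constructors (reduction may occur anywhere, including under binders and quotations) containing $(\lambda x{:}\tau.M)\,N\to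 M[x:=N]$, $\blacktriangleleft_\alpha\blacktriangleright_\alpha M\to M$, and $(\Lambda\alpha.M)\,A\to M[\alpha:=A]$. *)

(* Calculus lambda^triangleright, with de Bruijn indices for
   both term variables and transition variables. *)
From Stdlib Require Import List Arith.
Import ListNotations.

Definition tvar := nat.
Definition transition := list tvar.

Inductive ty : Type :=
| TBase  : nat -> ty
| TArr   : ty -> ty -> ty
| TLater : tvar -> ty -> ty
| TAll   : ty -> ty.

(* Terms: x | M M | \x:t.M | |>_a M (quote) | <|_a M (unquote)
          | /\a. M | M A.  Lam binds term index 0, TLam binds transition index 0. *)
Inductive tm : Type :=
| Var     : nat -> tm
| App     : tm -> tm -> tm
| Lam     : ty -> tm -> tm
| Quote   : tvar -> tm -> tm
| Unquote : tvar -> tm -> tm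
| TLam    : tm -> tm
| TApp    : tm -> transition -> tm.

Definition laters (A : transition) (t : ty) : ty := fold_right TLater t A.
Definition quotes (A : transition) (M : tm) : tm := fold_right Quote M A.
Definition unquotes (A : transition) (M : tm) : tm :=
  fold_left (fun acc a => Unquote a acc) A M.

Definition tsubst := nat -> transition.

Definition tsubst_up (s : tsubst) : tsubst :=
  fun k => match k with 0 => [0] | S k' => map S (s k') end.

Definition tr_subst (s : tsubst) (A : transition) : transition := flat_map s A.

Fixpoint ty_subst (s : tsubst) (t : ty) : ty :=
  match t with
  | TBase b => TBase b
  | TArr t1 t2 => TArr (ty_subst s t1) (ty_subst s t2)
  | TLater a t' => laters (s a) (ty_subst s t')
  | TAll t' => TAll (ty_subst (tsubst_up s) t')
  end.

Fixpoint tm_tsubst (s : tsubst) (M : tm) : tm :=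
  match M with
  | Var x => Var x
  | App M1 M2 => App (tm_tsubst s M1) (tm_tsubst s M2)
  | Lam t M' => Lam (ty_subst s t) (tm_tsubst s M')
  | Quote a M' => quotes (s a) (tm_tsubst s M')
  | Unquote a M' => unquotes (s a) (tm_tsubst s M')
  | TLam M' => TLam (tm_tsubst (tsubst_up s) M')
  | TApp M' A => TApp (tm_tsubst s M') (tr_subst s A)
  end.

Definition tshift : tsubst := fun k => [S k].
Definition tsubst1 (B : transition) : tsubst :=
  fun k => match k with 0 => B | S k' => [k'] end.

Definition up_ren (r : nat -> nat) : nat -> nat :=
  fun k => match k with 0 => 0 | S k' => S (r k') end.

Fixpoint tm_rename (r : nat -> nat) (M : tm) : tm :=
  match M with
  | Var x => Var (r x)
  | App M1 M2 => App (tm_rename r M1) (tm_rename r M2)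
  | Lam t M' => Lam t (tm_rename (up_ren r) M')
  | Quote a M' => Quote a (tm_rename r M')
  | Unquote a M' => Unquote a (tm_rename r M')
  | TLam M' => TLam (tm_rename r M')
  | TApp M' A => TApp (tm_rename r M') A
  end.

Definition up_tm (s : nat -> tm) : nat -> tm :=
  fun k => match k with 0 => Var 0 | S k' => tm_rename S (s k') end.

Fixpoint tm_subst (s : nat -> tm) (M : tm) : tm :=
  match M with
  | Var x => s x
  | App M1 M2 => App (tm_subst s M1) (tm_subst s M2)
  | Lam t M' => Lam t (tm_subst (up_tm s) M')
  | Quote a M' => Quote a (tm_subst s M')
  | Unquote a M' => Unquote a (tm_subst s M')
  | TLam M' => TLam (tm_subst (fun k => tm_tsubst tshift (s k)) M')
  | TApp M' A => TApp (tm_subst s M') A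
  end.

Definition tm_subst1 (N : tm) : nat -> tm :=
  fun k => match k with 0 => N | S k' => Var k' end.

(* Contexts: x_i : tau_i @ A_i, with x_i the i-th de Bruijn index. *)
Definition ctx := list (ty * transition).

Definition ctx_tshift (G : ctx) : ctx :=
  map (fun p => (ty_subst tshift (fst p), tr_subst tshift (snd p))) G.

Inductive typing : ctx -> transition -> tm -> ty -> Prop :=
| T_Var : forall G A x t,
    nth_error G x = Some (t, A) ->
    typing G A (Var x) t
| T_Abs : forall G A t s M,
    typing ((t, A) :: G) A M s ->
    typing G A (Lam t M) (TArr t s)
| T_App : forall G A M N t s,
    typing G A M (TArr t s) ->
    typing G A N t ->
    typing G A (App M N) s
| T_Quote : forall G A a M t,
    typing G (A ++ [a]) M t ->
    typing G A (Quote a M) (TLater a t)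
| T_Unquote : forall G A a M t,
    typing G A M (TLater a t) ->
    typing G (A ++ [a]) (Unquote a M) t
| T_Gen : forall G A M t,
    (* the generalized variable is fresh for G and A: index 0 after shifting *)
    typing (ctx_tshift G) (tr_subst tshift A) M t ->
    typing G A (TLam M) (TAll t)
| T_Ins : forall G A M t B,
    typing G A M (TAll t) ->
    typing G A (TApp M B) (ty_subst (tsubst1 B) t).

Inductive step : tm -> tm -> Prop :=
| S_Beta : forall t M N, step (App (Lam t M) N) (tm_subst (tm_subst1 N) M)
| S_QU : forall a M, step (Unquote a (Quote a M)) M
| S_TBeta : forall M A, step (TApp (TLam M) A) (tm_tsubst (tsubst1 A) M)
| S_App1 : forall M M' N, step M M' -> step (App M N) (App M' N)
| S_App2 : forall M N N', step N N' -> step (App M N) (App M N')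
| S_Lam : forall t M M', step M M' -> step (Lam t M) (Lam t M')
| S_Quote : forall a M M', step M M' -> step (Quote a M) (Quote a M')
| S_Unquote : forall a M M', step M M' -> step (Unquote a M) (Unquote a M')
| S_TLam : forall M M', step M M' -> step (TLam M) (TLam M')
| S_TApp : forall M M' A, step M M' -> step (TApp M A) (TApp M' A).

(* Subject reduction by the usual two substitution lemmas.  Substituting
   transitions for transition variables preserves typing because a quotation
   or unquotation at a variable that becomes the transition C turns into |C|
   nested (un)quotations, whose stages compose by concatenation; substituting
   well-typed terms for term variables preserves typing given weakening.
   Each redex is then typed by one of these lemmas, and the congruence rules
   follow from inverting the typing rule of the enclosing constructor. *)
From Stdlib Require Import List.
Import ListNotations.

Definition ctx_tsubst (s : tsubst) (G : ctx) : ctx :=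
  map (fun p => (ty_subst s (fst p), tr_subst s (snd p))) G.

Definition tsubst_comp (s1 s2 : tsubst) : tsubst := fun k => tr_subst s2 (s1 k).

Lemma ctx_tshiftE (G : ctx) : ctx_tshift G = ctx_tsubst tshift G.
Proof. reflexivity. Qed.

Lemma laters_app (X Y : transition) (t : ty) :
  laters (X ++ Y) t = laters X (laters Y t).
Proof. apply fold_right_app. Qed.

Lemma tr_subst_app (s : tsubst) (A B : transition) :
  tr_subst s (A ++ B) = tr_subst s A ++ tr_subst s B.
Proof. apply flat_map_app. Qed.

Lemma tr_subst_singleton (s : tsubst) (a : tvar) : tr_subst s [a] = s a.
Proof. apply app_nil_r. Qed.

Lemma ty_subst_laters (s : tsubst) (C : transition) (t : ty) :
  ty_subst s (laters C t) = laters (tr_subst s C) (ty_subst s t).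
Proof.
  induction C as [|c C IH]; simpl; auto.
  rewrite IH, <- laters_app. reflexivity.
Qed.

Lemma tsubst_up_ext (s s' : tsubst) :
  (forall k, s k = s' k) -> forall k, tsubst_up s k = tsubst_up s' k.
Proof. intros H [|k]; simpl; [reflexivity | now rewrite H]. Qed.

Lemma tr_subst_ext (A : transition) (s s' : tsubst) :
  (forall k, s k = s' k) -> tr_subst s A = tr_subst s' A.
Proof. intros H. apply flat_map_ext. exact H. Qed.

Lemma ty_subst_ext (t : ty) : forall s s' : tsubst,
  (forall k, s k = s' k) -> ty_subst s t = ty_subst s' t.
Proof.
  induction t; intros s s' H; simpl.
  - reflexivity.
  - now rewrite (IHt1 s s'), (IHt2 s s').
  - now rewrite H, (IHt s s').
  - now rewrite (IHt _ _ (tsubst_up_ext s s' H)).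
Qed.

Lemma ctx_tsubst_ext (s s' : tsubst) (G : ctx) :
  (forall k, s k = s' k) -> ctx_tsubst s G = ctx_tsubst s' G.
Proof.
  intros H. apply map_ext. intros [u C]; simpl.
  now rewrite (ty_subst_ext u s s' H), (tr_subst_ext C s s' H).
Qed.

Lemma tr_subst_comp (s1 s2 : tsubst) (A : transition) :
  tr_subst s2 (tr_subst s1 A) = tr_subst (tsubst_comp s1 s2) A.
Proof.
  induction A as [|a A IH]; simpl; auto.
  rewrite tr_subst_app. f_equal. exact IH.
Qed.

Lemma tr_subst_up_map_S (s : tsubst) (A : transition) :
  tr_subst (tsubst_up s) (map S A) = map S (tr_subst s A).
Proof.
  induction A as [|a A IH]; simpl; auto.
  rewrite map_app. f_equal. exact IH.
Qed.

Lemma tsubst_up_comp (s1 s2 : tsubst) (k : nat) :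
  tsubst_comp (tsubst_up s1) (tsubst_up s2) k = tsubst_up (tsubst_comp s1 s2) k.
Proof. destruct k; unfold tsubst_comp; simpl; [reflexivity | apply tr_subst_up_map_S]. Qed.

Lemma ty_subst_comp (t : ty) : forall s1 s2 : tsubst,
  ty_subst s2 (ty_subst s1 t) = ty_subst (tsubst_comp s1 s2) t.
Proof.
  induction t; intros s1 s2; simpl.
  - reflexivity.
  - now rewrite IHt1, IHt2.
  - now rewrite ty_subst_laters, IHt.
  - rewrite IHt. f_equal. apply ty_subst_ext, tsubst_up_comp.
Qed.

Lemma ctx_tsubst_comp (s1 s2 : tsubst) (G : ctx) :
  ctx_tsubst s2 (ctx_tsubst s1 G) = ctx_tsubst (tsubst_comp s1 s2) G.
Proof.
  unfold ctx_tsubst. rewrite map_map. apply map_ext. intros [u C]; simpl.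
  now rewrite ty_subst_comp, tr_subst_comp.
Qed.

Lemma tr_subst_id (s : tsubst) (A : transition) :
  (forall k, s k = [k]) -> tr_subst s A = A.
Proof.
  intros H. induction A as [|a A IH]; simpl; auto.
  now rewrite H, IH.
Qed.

Lemma ty_subst_id (t : ty) : forall s : tsubst,
  (forall k, s k = [k]) -> ty_subst s t = t.
Proof.
  induction t; intros s H; simpl.
  - reflexivity.
  - now rewrite IHt1, IHt2.
  - now rewrite H, IHt.
  - rewrite IHt; auto. intros [|k]; simpl; [reflexivity | now rewrite H].
Qed.

Lemma ctx_tsubst_id (s : tsubst) (G : ctx) :
  (forall k, s k = [k]) -> ctx_tsubst s G = G.
Proof.
  intros H. induction G as [|[u C] G IH]; simpl; auto.
  now rewrite ty_subst_id, tr_subst_id, IH.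
Qed.

Lemma tr_subst_tshift (A : transition) : tr_subst tshift A = map S A.
Proof. induction A as [|a A IH]; simpl; [reflexivity | now rewrite IH]. Qed.

Lemma tshift_comp_up (s : tsubst) (k : nat) :
  tsubst_comp tshift (tsubst_up s) k = tsubst_comp s tshift k.
Proof.
  unfold tsubst_comp, tshift. now rewrite tr_subst_singleton, tr_subst_tshift.
Qed.

Lemma tr_subst_tsubst1_map_S (B A : transition) :
  tr_subst (tsubst1 B) (map S A) = A.
Proof. induction A as [|a A IH]; simpl; [reflexivity | now rewrite IH]. Qed.

Lemma tsubst1_comp_up (s : tsubst) (B : transition) (k : nat) :
  tsubst_comp (tsubst_up s) (tsubst1 (tr_subst s B)) k = tsubst_comp (tsubst1 B) s k.
Proof.
  destruct k as [|k]; unfold tsubst_comp; simpl; rewrite app_nil_r;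
    [reflexivity | apply tr_subst_tsubst1_map_S].
Qed.

Lemma typing_quotes (C : transition) : forall G B M t,
  typing G (B ++ C) M t -> typing G B (quotes C M) (laters C t).
Proof.
  induction C as [|c C IH]; intros G B M t H; simpl.
  - now rewrite app_nil_r in H.
  - constructor. apply IH. now rewrite <- app_assoc.
Qed.

Lemma typing_unquotes (C : transition) : forall G B M t,
  typing G B M (laters C t) -> typing G (B ++ C) (unquotes C M) t.
Proof.
  induction C as [|c C IH]; intros G B M t H; simpl.
  - now rewrite app_nil_r.
  - replace (B ++ c :: C) with ((B ++ [c]) ++ C) by now rewrite <- app_assoc.
    apply IH. now constructor.
Qed.

Lemma typing_tsubst G A M t : typing G A M t ->
  forall s, typing (ctx_tsubst s G) (tr_subst s A) (tm_tsubst s M) (ty_subst s t).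
Proof.
  induction 1 as [G A x t Hx|G A t u M _ IH|G A M N t u _ IH1 _ IH2
                 |G A a M t _ IH|G A a M t _ IH|G A M t _ IH|G A M t B _ IH];
    intros s; simpl.
  - constructor. unfold ctx_tsubst. now rewrite nth_error_map, Hx.
  - constructor. apply (IH s).
  - econstructor; [apply (IH1 s) | apply (IH2 s)].
  - apply typing_quotes. rewrite <- tr_subst_singleton, <- tr_subst_app. apply IH.
  - rewrite tr_subst_app, tr_subst_singleton. apply typing_unquotes, (IH s).
  - constructor. specialize (IH (tsubst_up s)).
    rewrite !ctx_tshiftE, !ctx_tsubst_comp, !tr_subst_comp in *.
    rewrite (ctx_tsubst_ext _ _ G (tshift_comp_up s)),
            (tr_subst_ext A _ _ (tshift_comp_up s)) in IH.
    exact IH.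
  - rewrite ty_subst_comp, <- (ty_subst_ext t _ _ (tsubst1_comp_up s B)),
            <- ty_subst_comp.
    econstructor. apply (IH s).
Qed.

Lemma typing_tsubst1 G A M t B :
  typing (ctx_tshift G) (tr_subst tshift A) M t ->
  typing G A (tm_tsubst (tsubst1 B) M) (ty_subst (tsubst1 B) t).
Proof.
  intros H. apply typing_tsubst with (s := tsubst1 B) in H.
  rewrite ctx_tshiftE, ctx_tsubst_comp, tr_subst_comp in H.
  now rewrite ctx_tsubst_id, tr_subst_id in H.
Qed.

Lemma typing_rename G A M t : typing G A M t ->
  forall G' r, (forall x p, nth_error G x = Some p -> nth_error G' (r x) = Some p) ->
  typing G' A (tm_rename r M) t.
Proof.
  induction 1 as [G A x t Hx|G A t u M _ IH|G A M N t u _ IH1 _ IH2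
                 |G A a M t _ IH|G A a M t _ IH|G A M t _ IH|G A M t B _ IH];
    intros G' r Hr; simpl.
  - constructor. auto.
  - constructor. apply IH. intros [|x] p Hx; simpl in *; auto.
  - econstructor; eauto.
  - constructor. auto.
  - constructor. auto.
  - constructor. apply IH. intros x p Hx. unfold ctx_tshift in *.
    rewrite nth_error_map in *.
    destruct (nth_error G x) eqn:E; [|discriminate].
    now rewrite (Hr _ _ E).
  - econstructor; eauto.
Qed.

Lemma typing_subst G A M t : typing G A M t ->
  forall G' s, (forall x u C, nth_error G x = Some (u, C) -> typing G' C (s x) u) ->
  typing G' A (tm_subst s M) t.
Proof.
  induction 1 as [G A x t Hx|G A t u M _ IH|G A M N t u _ IH1 _ IH2
                 |G A a M t _ IH|G A a M t _ IH|G A M t _ IH|G A M t B _ IH];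
    intros G' s Hs; simpl.
  - auto.
  - constructor. apply IH. intros [|x] v C Hx; simpl in *.
    + injection Hx as <- <-. now constructor.
    + eapply typing_rename; eauto.
  - econstructor; eauto.
  - constructor. auto.
  - constructor. auto.
  - constructor. apply IH. intros x v C Hx. unfold ctx_tshift in Hx.
    rewrite nth_error_map in Hx.
    destruct (nth_error G x) as [[v0 C0]|] eqn:E; [|discriminate].
    injection Hx as <- <-. apply (typing_tsubst _ _ _ _ (Hs _ _ _ E) tshift).
  - econstructor; eauto.
Qed.

Lemma typing_subst1 G A M N t u :
  typing ((u, A) :: G) A M t -> typing G A N u ->
  typing G A (tm_subst (tm_subst1 N) M) t.
Proof.
  intros HM HN. apply (typing_subst _ _ _ _ HM).
  intros [|x] v C Hx; simpl in *.
  - now injection Hx as <- <-.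
  - now constructor.
Qed.

Lemma typing_beta G A u M N t :
  typing G A (App (Lam u M) N) t -> typing G A (tm_subst (tm_subst1 N) M) t.
Proof.
  intros H. inversion H as [| |? ? ? ? v ? HL HN| | | |]; subst.
  inversion HL; subst. eapply typing_subst1; eauto.
Qed.

Lemma typing_unquote_quote G A a M t :
  typing G A (Unquote a (Quote a M)) t -> typing G A M t.
Proof.
  intros H. inversion H as [| | | |? ? ? ? ? HQ| |]; subst.
  now inversion HQ; subst.
Qed.

Lemma typing_tbeta G A M B t :
  typing G A (TApp (TLam M) B) t -> typing G A (tm_tsubst (tsubst1 B) M) t.
Proof.
  intros H. inversion H as [| | | | | |? ? ? ? ? HL]; subst.
  inversion HL; subst. now apply typing_tsubst1.
Qed.

Theorem mainTheorem2 (G : ctx) (A : transition) (M M' : tm) (t : ty) :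
  typing G A M t -> step M M' -> typing G A M' t.
Proof.
  intros HT HS. revert G A t HT.
  induction HS; intros G0 A0 t0 HT;
    [ now apply typing_beta in HT
    | now apply typing_unquote_quote in HT
    | now apply typing_tbeta in HT
    | .. ].
  all: inversion HT; subst; econstructor; eauto.
Qed.
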